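(* Given distributions $F_S,F_B$, let $p^*:=\inf\{p:\mathbb{P}[S\ge p]\le 1/5\}$. If $\mathbb{P}[B\le p^*]\le 1/5$, then $\mathsf{W}(p^*;F_S,F_B)\ge\frac{17}{25}\,\mathsf{OPT\text{-}W}(F_S,F_B)$.
   Context: Asymmetric bilateral trade: $S\sim F_S$, $B\sim F_B$ independent, distributions on $[0,\infty)$ with finite means. Posting price $p$, trade iff $B>p\ge S$. $\mathsf{W}(p;F_S,F_B)=\mathbb{E}[S+(B-S)\mathbf 1_{B>p\ge S}]$, $\mathsf{OPT\text{-}W}(F_S,F_B)=\mathbb{E}[\max\{B,S\}]$. *)

From HB Require Import structures.
From mathcomp Require Import all_boot all_order all_algebra.
From mathcomp Require Import all_classical all_reals all_analysis.
Set Implicit Arguments. Unset Strict Implicit. Unset Printing Implicit Defensive.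
Import Order.TTheory GRing.Theory Num.Theory.
Local Open Scope classical_set_scope.
Local Open Scope ring_scope.

(* Independent S ~ FS, B ~ FB : the joint law is the product measure FS \x FB
   on R * R, with first coordinate S (seller) and second coordinate B (buyer). *)

Definition W (R : realType) (FS FB : probability R R) (p : R) : \bar R :=
  (\int[FS \x FB]_(x in [set: R * R])
     (x.1 + (x.2 - x.1) * ((p < x.2) && (x.1 <= p))%:R)%:E)%E.

Definition OPTW (R : realType) (FS FB : probability R R) : \bar R :=
  (\int[FS \x FB]_(x in [set: R * R]) (Num.max x.2 x.1)%:E)%E.

Definition pstar (R : realType) (FS : probability R R) : R :=
  inf [set p : R | (FS `[p, +oo[%classic <= (1 / 5 : R)%:E)%E].

Definition nonneg_finite_mean (R : realType) (F : probability R R) : Prop :=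
  F `]-oo, 0[%classic = 0%E /\ F.-integrable [set: R] (fun x => x%:E).

From HB Require Import structures.
From mathcomp Require Import all_boot all_order all_algebra.
From mathcomp Require Import all_classical all_reals all_analysis.
From mathcomp Require Import measurable_realfun lra.
Import Order.TTheory GRing.Theory Num.Theory.
Local Open Scope classical_set_scope.
Local Open Scope ring_scope.

(* Write x^+ = max(x, 0) and p = p*.  For s >= 0 the gains
   from trade of posting p split pointwise into three separable pieces,
     s + (b - s) 1_{b > p >= s} = s^+ + 1_{s <= p} (b - p)^+ + (p - s)^+ 1_{b > p},
   while max(b, s) <= s^+ + (b - p)^+ + (p - s)^+.  Integrating against the
   product law FS \x FB (Tonelli), and using that S >= 0 almost surely,
     W(p)   = E[S^+] + P[S <= p] E[(B - p)^+] + E[(p - S)^+] P[B > p],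
     OPT-W <= E[S^+] +           E[(B - p)^+] + E[(p - S)^+].
   Hence a OPT-W <= W(p) as soon as a <= 1, a <= P[S <= p] and a <= P[B > p].
   For p = p*, right continuity of the tail function r |-> P[S > r] gives
   P[S > p*] <= 1/5, and P[B <= p*] <= 1/5 is assumed, so both probabilities
   are at least 4/5 >= 17/25.
   The file proves the pointwise identities, the integration lemmas over a
   product of probabilities, the two decompositions and the approximation
   bound, then the tail bound at p*, and derives lemma12 from them. *)

Section pointwise.
Context {R : realType}.

Lemma indic_ray_le (p x : R) : \1_(`]-oo, p]%classic) x = (x <= p)%R%:R :> R.
Proof. by rewrite indicE mem_setE in_itv. Qed.

Lemma indic_ray_gt (p x : R) : \1_(`]p, +oo[%classic) x = (p < x)%R%:R :> R.
Proof. by rewrite indicE mem_setE in_itv /= andbT. Qed.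

Lemma trade_indicator (p s b : R) :
  ((p < b) && (s <= p))%R%:R =
  \1_(`]-oo, p]%classic) s * \1_(`]p, +oo[%classic) b :> R.
Proof.
rewrite indic_ray_le indic_ray_gt andbC.
by case: (s <= p)%R; rewrite ?mul1r ?mul0r.
Qed.

Lemma welfare_split (p s b : R) : 0 <= s ->
  s + (b - s) * ((p < b) && (s <= p))%R%:R =
  Num.max s 0 * 1 + \1_(`]-oo, p]%classic) s * Num.max (b - p) 0
  + Num.max (p - s) 0 * \1_(`]p, +oo[%classic) b.
Proof.
move=> s_ge0.
have above : Num.max (b - p) 0 = if (p < b)%R then b - p else 0.
  by case: ltP => h; [apply/max_idPl; lra | apply/max_idPr; lra].
have below : Num.max (p - s) 0 = if (s <= p)%R then p - s else 0.
  by case: leP => h; [apply/max_idPl; lra | apply/max_idPr; lra].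
rewrite above below indic_ray_le indic_ray_gt (max_idPl s_ge0).
by case: leP => sp; case: ltP => pb /=; lra.
Qed.

Lemma optimum_split (p s b : R) :
  Num.max b (Num.max s 0) <=
  Num.max s 0 * 1 + 1 * Num.max (b - p) 0 + Num.max (p - s) 0 * 1.
Proof.
have le_pos (x : R) : x <= Num.max x 0 by rewrite le_max lexx.
have pos_ge0 (x : R) : 0 <= Num.max x 0 by rewrite le_max lexx orbT.
have := le_pos s; have := pos_ge0 (b - p); have := le_pos (b - p).
have := pos_ge0 (p - s); have := le_pos (p - s).
by rewrite mulr1 mul1r mulr1 ge_max => *; apply/andP; split; lra.
Qed.

End pointwise.

Definition nonneg_mfun {R : realType} (f : R -> R) : Prop :=
  measurable_fun [set: R] f /\ forall x, 0 <= f x.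

Section nonneg_mfun.
Context {R : realType}.

Lemma nonneg_mfun_one : nonneg_mfun (fun _ : R => 1).
Proof. by split=> [|x]; [exact: measurable_cst | exact: ler01]. Qed.

Lemma nonneg_mfun_indic (A : set R) : measurable A -> nonneg_mfun (\1_A).
Proof. by move=> mA; split=> [|x]; [exact: measurable_indic | rewrite indicE]. Qed.

Lemma nonneg_mfun_pos (f : R -> R) :
  measurable_fun [set: R] f -> nonneg_mfun (fun x => Num.max (f x) 0).
Proof.
move=> mf; split=> [|x]; last by rewrite le_max lexx orbT.
by apply: measurable_maxr => //; exact: measurable_cst.
Qed.

End nonneg_mfun.

Section product_integrals.
Context {R : realType} (FS FB : probability R R).
Local Open Scope ereal_scope.

Lemma measurable_separable (g h : R -> R) :
  measurable_fun [set: R] g -> measurable_fun [set: R] h ->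
  measurable_fun [set: R * R] (fun z : R * R => g z.1 * h z.2)%R.
Proof.
move=> mg mh; apply: measurable_funM.
- exact: measurableT_comp mg measurable_fst.
- exact: measurableT_comp mh measurable_snd.
Qed.

Lemma emeasurable_separable (g h : R -> R) :
  measurable_fun [set: R] g -> measurable_fun [set: R] h ->
  measurable_fun [set: R * R] (fun z : R * R => (g z.1 * h z.2)%:E).
Proof. by move=> mg mh; apply/measurable_EFinP; exact: measurable_separable. Qed.

Lemma integral_separable (g h : R -> R) : nonneg_mfun g -> nonneg_mfun h ->
  \int[FS \x FB]_(z in setT) (g z.1 * h z.2)%:E =
  (\int[FS]_(x in setT) (g x)%:E) * (\int[FB]_(y in setT) (h y)%:E).
Proof.
move=> [mg g0] [mh h0].
rewrite fubini_tonelli1 /fubini_F /=; last 2 first.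
- exact: emeasurable_separable.
- by move=> z; rewrite lee_fin mulr_ge0.
transitivity (\int[FS]_(x in setT) ((g x)%:E * \int[FB]_(y in setT) (h y)%:E)).
  apply: eq_integral => x _; rewrite -ge0_integralZl_EFin //.
  - by move=> y _; rewrite lee_fin.
  - exact/measurable_EFinP.
rewrite ge0_integralZr //.
- exact/measurable_EFinP.
- by move=> x _; rewrite lee_fin.
- by apply: integral_ge0 => y _; rewrite lee_fin.
Qed.

Lemma integral_separable3 (g1 h1 g2 h2 g3 h3 : R -> R) :
  nonneg_mfun g1 -> nonneg_mfun h1 -> nonneg_mfun g2 -> nonneg_mfun h2 ->
  nonneg_mfun g3 -> nonneg_mfun h3 ->
  \int[FS \x FB]_(z in setT)
     ((g1 z.1 * h1 z.2)%:E + (g2 z.1 * h2 z.2)%:E + (g3 z.1 * h3 z.2)%:E) =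
  (\int[FS]_(x in setT) (g1 x)%:E) * (\int[FB]_(y in setT) (h1 y)%:E)
  + (\int[FS]_(x in setT) (g2 x)%:E) * (\int[FB]_(y in setT) (h2 y)%:E)
  + (\int[FS]_(x in setT) (g3 x)%:E) * (\int[FB]_(y in setT) (h3 y)%:E).
Proof.
move=> G1 H1 G2 H2 G3 H3.
have meas (g h : R -> R) : nonneg_mfun g -> nonneg_mfun h ->
    measurable_fun [set: R * R] (fun z : R * R => (g z.1 * h z.2)%:E).
  by move=> [mg _] [mh _]; exact: emeasurable_separable.
have ge0 (g h : R -> R) : nonneg_mfun g -> nonneg_mfun h ->
    forall z : R * R, setT z -> 0 <= (g z.1 * h z.2)%:E.
  by move=> [_ g0] [_ h0] z _; rewrite lee_fin mulr_ge0.
have m1 := meas _ _ G1 H1; have m2 := meas _ _ G2 H2; have m3 := meas _ _ G3 H3.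
have p1 := ge0 _ _ G1 H1; have p2 := ge0 _ _ G2 H2; have p3 := ge0 _ _ G3 H3.
rewrite ge0_integralD //; first by rewrite ge0_integralD // !integral_separable.
- by move=> z _; rewrite adde_ge0 // ?p1 ?p2.
- exact (emeasurable_funD m1 m2).
Qed.

Lemma ae_eq_seller_nonneg (f g : R * R -> \bar R) :
  FS `]-oo, 0%R[%classic = 0 -> (forall z, (0 <= z.1)%R -> f z = g z) ->
  ae_eq (FS \x FB) setT f g.
Proof.
move=> S0 fg; exists (`]-oo, 0%R[%classic `*` setT); split.
- by apply: measurableX => //; exact: measurable_itv.
- transitivity (FS `]-oo, 0%R[%classic * FB setT).
    by apply: product_measure1E => //; exact: measurable_itv.
  by rewrite S0 mul0e.
- move=> z /= nfg; split => //=; rewrite in_itv /= ltNge; apply/negP => z0.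
  by apply: nfg => _; exact: fg.
Qed.

Lemma integral_prob_one (P : probability R R) :
  \int[P]_(x in setT) (1 : R)%:E = 1.
Proof. by rewrite integral_cst //= mul1e probability_setT. Qed.

End product_integrals.

Section welfare_bound.
Context {R : realType} (FS FB : probability R R) (p : R).
Hypothesis seller_nonneg : FS `]-oo, 0[%classic = 0%E.
Let mray_le : measurable (`]-oo, p]%classic : set R).
Proof. exact: measurable_itv. Qed.
Let mray_gt : measurable (`]p, +oo[%classic : set R).
Proof. exact: measurable_itv. Qed.
Let pos_id : nonneg_mfun (fun x : R => Num.max x 0).
Proof. exact/nonneg_mfun_pos/measurable_id. Qed.
Let pos_above : nonneg_mfun (fun x : R => Num.max (x - p) 0).
Proof. by apply/nonneg_mfun_pos/measurable_funB => //; exact: measurable_cst. Qed.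
Let pos_below : nonneg_mfun (fun x : R => Num.max (p - x) 0).
Proof. by apply/nonneg_mfun_pos/measurable_funB => //; exact: measurable_cst. Qed.

Local Open Scope ereal_scope.

Lemma W_decomposition :
  W FS FB p =
  \int[FS]_x (Num.max x 0)%:E
  + FS `]-oo, p]%classic * \int[FB]_y (Num.max (y - p) 0)%:E
  + \int[FS]_x (Num.max (p - x) 0)%:E * FB `]p, +oo[%classic.
Proof.
rewrite /W (ae_eq_integral (fun z : R * R =>
    (Num.max z.1 0 * 1)%:E
    + (\1_(`]-oo, p]%classic) z.1 * Num.max (z.2 - p) 0)%:E
    + (Num.max (p - z.1) 0 * \1_(`]p, +oo[%classic) z.2)%:E)) //.
- rewrite (integral_separable3 _ _ _ _ _ _ _ _ pos_id nonneg_mfun_one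
    (nonneg_mfun_indic _ mray_le) pos_above pos_below
    (nonneg_mfun_indic _ mray_gt)).
  by rewrite !integral_prob_one !integral_indic // !setIT mule1.
- apply/measurable_EFinP; under eq_fun do rewrite trade_indicator.
  apply: measurable_funD; first exact: measurable_fst.
  apply: measurable_funM.
    by apply: measurable_funB; [exact: measurable_snd | exact: measurable_fst].
  by apply: measurable_separable; exact: measurable_indic.
- have [[m1 _] [m2 _]] := (pos_id, pos_above); have [m3 _] := pos_below.
  have [[i1 _] [i2 _]] :=
    (nonneg_mfun_indic _ mray_le, nonneg_mfun_indic _ mray_gt).
  apply: emeasurable_funD; first apply: emeasurable_funD.
  + exact: (emeasurable_separable _ _ m1 (measurable_cst _)).
  + exact: (emeasurable_separable _ _ i1 m2).
  + exact: (emeasurable_separable _ _ m3 i2).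
- by apply: ae_eq_seller_nonneg => // z z0; rewrite -!EFinD welfare_split.
Qed.

Lemma OPTW_upper_bound :
  OPTW FS FB <=
  \int[FS]_x (Num.max x 0)%:E + \int[FB]_y (Num.max (y - p) 0)%:E
  + \int[FS]_x (Num.max (p - x) 0)%:E.
Proof.
have [[m1 g1] [m2 _]] := (pos_id, pos_above); have [m3 _] := pos_below.
pose bound (z : R * R) := (Num.max z.1 0 * 1)%:E + (1 * Num.max (z.2 - p) 0)%:E
  + (Num.max (p - z.1) 0 * 1)%:E.
have m_opt : measurable_fun [set: R * R]
    (fun z : R * R => (Num.max z.2 (Num.max z.1 0))%:E).
  apply/measurable_EFinP/measurable_maxr; first exact: measurable_snd.
  exact: measurableT_comp m1 measurable_fst.
rewrite /OPTW (ae_eq_integral _ _ _ _ m_opt) //; last 2 first.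
- apply/measurable_EFinP/measurable_maxr.
    exact: measurable_snd.
  exact: measurable_fst.
- by apply: ae_eq_seller_nonneg => // z z0; rewrite (max_idPl z0).
apply: (@le_trans _ _ (\int[FS \x FB]_(z in setT) bound z)).
  apply: ge0_le_integral => //.
  - by move=> z _; rewrite lee_fin le_max g1 orbT.
  - apply: emeasurable_funD; first apply: emeasurable_funD.
    + exact: (emeasurable_separable _ _ m1 (measurable_cst _)).
    + exact: (emeasurable_separable _ _ (measurable_cst _) m2).
    + exact: (emeasurable_separable _ _ m3 (measurable_cst _)).
  - by move=> z _; rewrite /bound -!EFinD lee_fin; exact: optimum_split.
rewrite (integral_separable3 _ _ _ _ _ _ _ _ pos_id nonneg_mfun_one
  nonneg_mfun_one pos_above pos_below nonneg_mfun_one).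
by rewrite !integral_prob_one !mule1 !mul1e.
Qed.

Lemma welfare_approximation (a : R) : (0 <= a <= 1)%R ->
  a%:E <= FS `]-oo, p]%classic -> a%:E <= FB `]p, +oo[%classic ->
  a%:E * OPTW FS FB <= W FS FB p.
Proof.
move=> /andP[a0 a1] aS aB; rewrite W_decomposition.
have a_ge0 : 0 <= a%:E by rewrite lee_fin.
apply: le_trans (lee_wpmul2l a_ge0 OPTW_upper_bound) _.
have [[_ g1] [_ g2]] := (pos_id, pos_above); have [_ g3] := pos_below.
set A := \int[FS]_x (Num.max x 0)%:E.
set X := \int[FB]_y (Num.max (y - p) 0)%:E.
set Y := \int[FS]_x (Num.max (p - x) 0)%:E.
have [A0 X0 Y0] : [/\ 0 <= A, 0 <= X & 0 <= Y].
  by split; apply: integral_ge0 => x _; rewrite lee_fin ?g1 ?g2 ?g3.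
clearbody A X Y.
rewrite !ge0_muleDr ?adde_ge0 //.
apply: leeD; first apply: leeD.
- by rewrite -[leRHS]mul1e; apply: lee_pmul => //; rewrite lee_fin.
- exact: lee_pmul.
- by rewrite muleC; apply: lee_pmul.
Qed.

End welfare_bound.

Section pstar_tail.
Context {R : realType} (FS : probability R R).
Local Open Scope ereal_scope.

(* The identity of R, seen as a random variable on (R, FS), so that the
   library's complementary distribution function r |-> FS ]r, +oo[ applies. *)
Let idR : R -> R := idfun.
#[local] HB.instance Definition _ :=
  @isMeasurableFun.Build _ _ _ _ idR (@measurable_id _ _ setT).

Let ccdf_idE (r : R) : ccdf (idR : {RV FS >-> R}) r = FS `]r, +oo[%classic.
Proof. by rewrite /ccdf /distribution /pushforward preimage_id. Qed.

(* The tail vanishes at +oo, so the infimum defining p* is over a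
   nonempty set. *)
Lemma pstar_set_nonempty :
  [set p : R | FS `[p, +oo[%classic <= (1 / 5 : R)%:E] !=set0.
Proof.
have fifth_gt0 : 0 < (1 / 5 : R)%:E by rewrite lte_fin divr_gt0.
have [M [_ HM]] := cvg_ccdfy0 (idR : {RV FS >-> R}) (open_ereal_lt' fifth_gt0).
exists (M + 2)%R.
apply/ltW/(le_lt_trans _ (HM (M + 1)%R _)); last by rewrite ltrDl.
rewrite ccdf_idE; apply: le_measure; rewrite ?inE; try exact: measurable_itv.
by apply: subitvPl; rewrite bnd_simp ltrD2l ltr1n.
Qed.

(* P[S > p*] <= 1/5: every r > p* lies above some p with P[S >= p] <= 1/5,
   and the tail function is right continuous. *)
Lemma pstar_upper_tail : FS `]pstar FS, +oo[%classic <= (1 / 5 : R)%:E.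
Proof.
rewrite -ccdf_idE.
apply: (cvge_le _ (@ccdf_right_continuous _ _ _ FS idR (pstar FS))).
near=> r; have pr : (pstar FS < r)%R by near: r; exact: nbhs_right_gt.
have [q Hq qr] := inf_lt pstar_set_nonempty pr.
rewrite ccdf_idE; apply: le_trans Hq; apply: le_measure; rewrite ?inE;
  try exact: measurable_itv.
by apply: subitvPl; rewrite bnd_simp ltW.
Unshelve. all: by end_near.
Qed.

End pstar_tail.

Lemma probability_setC_ge (R : realType) (P : probability R R) (A : set R)
    (e : R) :
  measurable A -> (P A <= e%:E)%E -> ((1 - e)%:E <= P (~` A))%E.
Proof.
move=> mA PA; rewrite probability_setC // -(fineK (fin_num_measure P _ mA)).
by rewrite -EFinB lee_fin lerD2l lerN2 -lee_fin fineK ?fin_num_measure.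
Qed.

Theorem lemma12 (R : realType) (FS FB : probability R R) :
  nonneg_finite_mean FS -> nonneg_finite_mean FB ->
  (FB `]-oo, pstar FS]%classic <= (1 / 5 : R)%:E)%E ->
  (((17 / 25 : R)%:E * OPTW FS FB) <= W FS FB (pstar FS))%E.
Proof.
move=> [seller_nonneg _] _ buyer_low.
have quota_le : (17 / 25 <= 1 - 1 / 5 :> R)%R by lra.
apply: welfare_approximation => //.
- by apply/andP; split; lra.
- rewrite -setCitvr.
  apply: le_trans (probability_setC_ge _ _ _ _ _ (pstar_upper_tail FS)).
  + by rewrite lee_fin.
  + exact: measurable_itv.
- rewrite -setCitvl.
  apply: le_trans (probability_setC_ge _ _ _ _ _ buyer_low).
  + by rewrite lee_fin.
  + exact: measurable_itv.
Qed.
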